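(* Let $\mathcal{C}\subseteq\mathbb{F}_q^n$ be a linear code of length $n$, dimension $k\ge1$ and minimum distance $d\ge2$, and let $J=n-k-d+2$. Then the average locality of $\mathcal{C}$ satisfies $$\overline{r}\ \ge\ \Big\lceil\frac{k}{J}\Big\rceil\left(1-\frac{J\lceil\frac{k}{J}\rceil-k}{n}\right).$$ Equivalently, $\overline{r}\ge \alpha\lceil k/J\rceil+(1-\alpha)\lfloor k/J\rfloor$ with $\alpha=\frac1n\big(J\lceil k/J\rceil-k\big)\big(\lfloor k/J\rfloor+1\big)$.
   Context: For a codeword $\mathbf{y}=(y_1,\dots,y_n)\in\mathcal{C}$, the locality $\mathrm{Loc}(y_i)$ of the $i$-th symbol is the smallest size of a set $\mathcal{I}\subseteq[1,n]\setminus\{i\}$ such that there are scalars $\alpha_l\in\mathbb{F}_q$ with $y_i=\sum_{l\in\mathcal{I}}\alpha_l y_l$ for every codeword $\mathbf{y}\in\mathcal{C}$. The average locality is $\overline{r}=\frac1n\sum_{i=1}^n\mathrm{Loc}(y_i)$. Note $J\ge1$ by the Singleton bound $d\le n-k+1$. *)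

From HB Require Import structures.
From mathcomp Require Import all_boot all_order all_algebra.
Set Implicit Arguments. Unset Strict Implicit. Unset Printing Implicit Defensive.
Import Order.TTheory GRing.Theory Num.Theory.

(* A linear code of length n over the finite field F is a subspace
   C : {vspace 'rV[F]_n}; codewords are row vectors y, with i-th symbol y ord0 i. *)

Definition wt (F : finFieldType) (n : nat) (y : 'rV[F]_n) : nat :=
  #|[set i : 'I_n | y ord0 i != 0%R]|.

Definition mindist (F : finFieldType) (n : nat) (C : {vspace 'rV[F]_n}) : nat :=
  \big[minn/n]_(y : 'rV[F]_n | (y \in C) && (y != 0%R)) wt y.

Definition repair_set (F : finFieldType) (n : nat) (C : {vspace 'rV[F]_n})
    (i : 'I_n) (I : {set 'I_n}) : bool :=
  (i \notin I) &&
  [exists alpha : {ffun 'I_n -> F},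
     [forall y : 'rV[F]_n, (y \in C) ==>
        (y ord0 i == \sum_(l in I) alpha l * y ord0 l)%R]].

(* Locality of the i-th symbol: the smallest size of a repair set
   (default n if none exists; when d >= 2 one always exists). *)
Definition Loc (F : finFieldType) (n : nat) (C : {vspace 'rV[F]_n}) (i : 'I_n) : nat :=
  \big[minn/n]_(I : {set 'I_n} | repair_set C i I) #|I|.

Definition avg_locality (F : finFieldType) (n : nat) (C : {vspace 'rV[F]_n}) : rat :=
  ((\sum_(i < n) Loc C i)%:R / n%:R)%R.

Definition ceildiv (a b : nat) : nat := (a + b.-1) %/ b.

From HB Require Import structures.
From mathcomp Require Import all_boot all_order all_algebra.
From mathcomp Require Import zify ring.
Import Order.TTheory GRing.Theory Num.Theory.

Set Implicit Arguments.
Unset Strict Implicit.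
Unset Printing Implicit Defensive.

(* For a set S of coordinates let V(S) be the subcode of
   codewords vanishing on S, e = dim V(S), and J(S) = n + 2 - |S| - e - d the
   quantity J of the code shortened on S; the Singleton bound gives J(S) >= 1.
   With t = ceil(k/J) we prove
      t (n - |S|) + t e <= sum_{l notin S} Loc l + t^2 J(S)
   by induction on n - |S|.  Let l notin S have least locality r.  If e <= r,
   the invariant k - e <= (|S| + e - k) r carried along the induction yields
   k <= J r, hence r >= t, and the bound follows from Loc >= r outside S.
   Otherwise a repair set I of l has size r < e, and passing to
   S' = {l} u S u I costs at most |I \ S| dimensions, since symbol l is a
   combination of the symbols in I; the induction step then reduces to
   (t - x)(t - x - 1) >= 0 for the integer drop x = e - e'.  At S = {} the
   inequality reads sum_l Loc l >= t (n - (J t - k)). *)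

Lemma consecutive_prod_ge (t e : nat) : ((2 * e + 1) * t <= t * t + e * e.+1)%N.
Proof. by case: (leqP t e) => ?; nia. Qed.

Lemma greedy_step_ineq (t : nat) {r r' D : nat} : (r' <= r)%N -> (r' < D)%N ->
  (t * D + t * r' <= r * D + t * t * (D - r'))%N.
Proof.
move=> le_r'r lt_r'D; have := consecutive_prod_ge t r'.
have : (r' * r'.+1 <= r * r'.+1)%N by rewrite leq_mul2r le_r'r orbT.
have : (t <= t * t)%N by case: t => // t; rewrite leq_pmull.
have [u ->] : exists u, D = (r' + u.+1)%N by exists (D - r').-1; lia.
by rewrite (_ : r' + u.+1 - r' = u.+1)%N /=; nia.
Qed.

Lemma terminal_step_ineq {t r e N B : nat} :
  (t <= r)%N -> (e <= r)%N -> (e <= N)%N -> (0 < B)%N ->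
  (t * N + t * e <= r * N + t * t * B)%N.
Proof.
move=> *; have : (2 * t * e <= t * t + e * e)%N by case: (leqP t e) => ?; nia.
nia.
Qed.

Lemma greedy_invariant_step (k e e' s s' L r : nat) :
  (k - e <= (s + e - k) * L)%N -> (r <= L)%N -> (e - e' <= r)%N ->
  (s + e < s' + e')%N -> (k - e' <= (s' + e' - k) * L)%N.
Proof.
move=> inv le_rL le_r lt_se; case: (leqP k (s + e)) => [le_k | lt_k]; last first.
  by move: inv; rewrite (_ : s + e - k = 0)%N ?mul0n; lia.
have := leq_mul (_ : (s + e - k).+1 <= s' + e' - k)%N (leqnn L).
by rewrite mulSn; lia.
Qed.

Lemma leq_ceildiv (k J r : nat) : (0 < J)%N ->
  (ceildiv k J <= r)%N = (k <= J * r)%N.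
Proof.
move=> J_gt0; rewrite /ceildiv -ltnS ltn_divLR // mulSn.
by apply/idP/idP; lia.
Qed.

(* Needed for [bigD1] on the [\big[minn/n]] of [mindist] and [Loc]. *)
HB.instance Definition _ := SemiGroup.isComLaw.Build nat minn minnA minnC.

Lemma card_mul_le_sum {T : finType} {X : {set T}} {f : T -> nat} {r : nat} :
  (forall m, m \in X -> r <= f m)%N -> (r * #|X| <= \sum_(m in X) f m)%N.
Proof. by move=> le_rf; rewrite mulnC -sum_nat_const leq_sum. Qed.

Section Shortening.
Variables (F : finFieldType) (n : nat) (C : {vspace 'rV[F]_n}).
Implicit Types (S A I : {set 'I_n}) (y : 'rV[F]_n).

Definition coord_select A : 'M[F]_(n, #|A|) :=
  (\matrix_(i, j) (i == enum_val j)%:R)%R.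

Lemma coord_select_eq0 A y :
  (y *m coord_select A == 0)%R = [forall j in A, y ord0 j == 0%R].
Proof.
have coordE j : (y *m coord_select A)%R ord0 j = y ord0 (enum_val j).
  rewrite !mxE (bigD1 (enum_val j)) //= mxE eqxx mulr1 big1 ?addr0 // => i ne_ij.
  by rewrite mxE (negbTE ne_ij) mulr0.
apply/eqP/forall_inP => [y0 i iA | yA].
  by rewrite -(enum_rankK_in iA iA) -coordE y0 mxE.
by apply/rowP => j; rewrite coordE mxE; apply/eqP/yA/enum_valP.
Qed.

Definition vanishing S : {vspace 'rV[F]_n} :=
  (C :&: lker (linfun (mulmxr (coord_select S))))%VS.

Lemma mem_vanishing S y :
  (y \in vanishing S) = (y \in C) && [forall j in S, y ord0 j == 0%R].
Proof. by rewrite memv_cap memv_ker lfunE coord_select_eq0. Qed.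

Lemma vanishing0 : vanishing set0 = C.
Proof.
apply/vspaceP => y; rewrite mem_vanishing andb_idr // => _.
by apply/forall_inP => j; rewrite inE.
Qed.

Lemma vanishingT : vanishing setT = 0%VS.
Proof.
apply/vspaceP => y; rewrite mem_vanishing memv0.
apply/andP/eqP => [[_ /forall_inP y0] | ->]; last first.
  by rewrite mem0v; split=> //; apply/forall_inP => j _; rewrite mxE.
by apply/rowP => j; rewrite mxE; apply/eqP/y0; rewrite inE.
Qed.

Lemma vanishingS {S S'} : S \subset S' -> (vanishing S' <= vanishing S)%VS.
Proof.
move=> sSS'; apply/subvP => y; rewrite !mem_vanishing => /andP[-> /forall_inP y0].
by apply/forall_inP => j /(subsetP sSS'); apply: y0.
Qed.

Lemma dim_vanishing_setU S A :
  (\dim (vanishing S) <= \dim (vanishing (S :|: A)) + #|A|)%N.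
Proof.
pose g := linfun (mulmxr (coord_select A) : 'rV[F]_n -> 'rV[F]_#|A|).
have -> : vanishing (S :|: A) = (vanishing S :&: lker g)%VS.
  apply/vspaceP => y; rewrite mem_vanishing [RHS]memv_cap memv_ker lfunE.
  rewrite coord_select_eq0 mem_vanishing -andbA; congr (_ && _).
  apply/forall_inP/andP => [ySA | [/forall_inP yS /forall_inP yA] j].
    by split; apply/forall_inP => j jSA; apply: ySA; rewrite inE jSA ?orbT.
  by rewrite inE => /orP[/yS | /yA].
rewrite -(limg_ker_dim g (vanishing S)) leq_add2l.
by apply: leq_trans (dimvS (subvf _)) _; rewrite dimvf /dim /= mul1n.
Qed.

Lemma dim_vanishing_le_compl S : (\dim (vanishing S) <= n - #|S|)%N.
Proof.
have := dim_vanishing_setU S (~: S); rewrite setUCr vanishingT dimv0 add0n.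
by have := cardsC S; rewrite card_ord; lia.
Qed.

Lemma dim_le_vanishing_card S : (\dim C <= \dim (vanishing S) + #|S|)%N.
Proof. by have := dim_vanishing_setU set0 S; rewrite vanishing0 set0U. Qed.

Lemma vanishing_compl_neq0 {S} :
  (0 < \dim (vanishing S))%N -> exists m, m \notin S.
Proof.
move=> dim_gt0; apply/existsP; apply: contraTT dim_gt0 => /existsPn allS.
have -> : S = setT by apply/setP => m; rewrite inE; apply/negbNE/allS.
by rewrite vanishingT dimv0.
Qed.

Lemma mindist_vanishing {S y} : y \in vanishing S -> y != 0%R ->
  (mindist C + #|S| <= n)%N.
Proof.
rewrite mem_vanishing => /andP[yC /forall_inP yS] y_neq0.
have d_le_wt : (mindist C <= wt y)%N.
  by rewrite /mindist (bigD1 y) /= ?yC ?y_neq0 ?geq_minl.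
have wt_le : (wt y <= #|~: S|)%N.
  apply/subset_leq_card/subsetP => i; rewrite !inE; apply: contra => iS.
  exact: yS.
by move: (cardsC S) d_le_wt wt_le; rewrite card_ord; lia.
Qed.

Lemma singleton_vanishing {S} : (0 < \dim (vanishing S))%N ->
  (#|S| + \dim (vanishing S) + mindist C <= n.+1)%N.
Proof.
move=> dim_gt0; suff: forall e T, (0 < e <= \dim (vanishing T))%N ->
    (#|T| + e + mindist C <= n.+1)%N by apply; rewrite dim_gt0 leqnn.
elim=> // -[_ | e IH] T /andP[_ le_dim].
  have pick_neq0 : vpick (vanishing T) != 0%R by rewrite vpick0 -dimv_eq0 -lt0n.
  by have := mindist_vanishing (memv_pick (vanishing T)) pick_neq0; lia.
have [m mT] := vanishing_compl_neq0 (leq_trans (isT : 0 < e.+2)%N le_dim).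
have := dim_vanishing_setU T [set m]; rewrite setUC cards1 => le_dim1.
have := IH (m |: T); rewrite cardsU1 mT; lia.
Qed.

Lemma vanishing_repair S l I : repair_set C l I ->
  vanishing (l |: (S :|: I)) = vanishing (S :|: I).
Proof.
case/andP=> _ /existsP[alpha /forallP repl].
apply/vspaceP => y; rewrite !mem_vanishing; case yC: (y \in C) => //=.
apply/forall_inP/forall_inP => [y0 m mSI | y0 m].
  by apply: y0; rewrite in_setU1 mSI orbT.
rewrite in_setU1 => /orP[/eqP-> | /y0 //].
move: (repl y); rewrite yC => /eqP->; apply/eqP/big1 => j jI.
by rewrite (eqP (y0 j _)) ?mulr0 // inE jI orbT.
Qed.

Lemma Loc_le l I : repair_set C l I -> (Loc C l <= #|I|)%N.
Proof. by move=> repI; rewrite /Loc (bigD1 I) ?geq_minl. Qed.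

Lemma Loc_repair l : (Loc C l < n)%N ->
  exists2 I, repair_set C l I & #|I| = Loc C l.
Proof.
case: (pickP (repair_set C l)) => [I0 rep0 | none]; last first.
  by rewrite /Loc big_pred0 ?ltnn.
case: (arg_minnP (fun I => #|I|) rep0) => I repI minI _; exists I => //.
apply/eqP; rewrite eqn_leq Loc_le // andbT /Loc.
apply: (big_ind (fun x => #|I| <= x)%N) => [| x y | J /minI //].
- by have := max_card I; rewrite card_ord.
- by rewrite leq_min => -> ->.
Qed.

Lemma dim_vanishing_repair {l I} S : repair_set C l I ->
  (\dim (vanishing S) <= \dim (vanishing (l |: (S :|: I))) + #|I :\: S|)%N.
Proof.
move=> repI; rewrite vanishing_repair //.
by have := dim_vanishing_setU S (I :\: S); rewrite setDE setUIr setUCr setIT.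
Qed.

(* The J of the code shortened on S (length n - |S|, dimension dim V(S)). *)
Definition shortJ S := (n.+2 - (#|S| + \dim (vanishing S) + mindist C))%N.

Lemma sum_Loc_extend {t r : nat} {S S'} : S \subset S' ->
  (0 < \dim (vanishing S'))%N -> (forall m, m \notin S -> r <= Loc C m)%N ->
  (\dim (vanishing S) - \dim (vanishing S') <= r)%N ->
  (\dim (vanishing S) - \dim (vanishing S') < #|S'| - #|S|)%N ->
  (t * (n - #|S'|) + t * \dim (vanishing S')
     <= \sum_(m in ~: S') Loc C m + t * t * shortJ S')%N ->
  (t * (n - #|S|) + t * \dim (vanishing S)
     <= \sum_(m in ~: S) Loc C m + t * t * shortJ S)%N.
Proof.
move=> sSS' e'_gt0 le_rLoc le_r'r lt_r'D le_S'.
have sum_D : (r * #|S' :\: S| <= \sum_(m in S' :\: S) Loc C m)%N.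
  by apply: card_mul_le_sum => m /setDP[_]; apply: le_rLoc.
rewrite cardsD (setIidPr sSS') in sum_D.
rewrite (big_setID (~: S')) /= (setIidPr (_ : ~: S' \subset ~: S)) ?setCS //.
rewrite (_ : ~: S :\: ~: S' = S' :\: S); last by rewrite !setDE setCK setIC.
have step := greedy_step_ineq t le_r'r lt_r'D.
have le_e'e := dimvS (vanishingS sSS').
have le_ss' := subset_leq_card sSS'.
have := singleton_vanishing e'_gt0; move: le_S' step sum_D le_e'e le_ss' lt_r'D.
rewrite /shortJ; set s := #|S|; set s' := #|S'|; set e : nat := \dim (vanishing S).
set e' : nat := \dim (vanishing S'); set d := mindist C => le_S' step sum_D *.
rewrite (_ : n - s = n - s' + (s' - s))%N; last by lia.
rewrite (_ : e = e' + (e - e'))%N; last by lia.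
rewrite (_ : n.+2 - (s + (e' + (e - e')) + d)
             = n.+2 - (s' + e' + d) + (s' - s - (e - e')))%N; last by lia.
rewrite !mulnDr [leqLHS]addnACA [leqRHS]addnACA.
by apply: leq_add le_S' (leq_trans step (leq_add sum_D (leqnn _))).
Qed.

Section Greedy.
Variable t : nat.
Hypothesis t_min :
  forall r, (\dim C <= (n.+2 - (\dim C + mindist C)) * r)%N -> (t <= r)%N.

Lemma sum_Loc_terminal {r S} : (0 < \dim (vanishing S))%N ->
  (forall m, m \notin S -> r <= Loc C m)%N ->
  (\dim C - \dim (vanishing S) <= (#|S| + \dim (vanishing S) - \dim C) * r)%N ->
  (\dim (vanishing S) <= r)%N ->
  (t * (n - #|S|) + t * \dim (vanishing S)
     <= \sum_(m in ~: S) Loc C m + t * t * shortJ S)%N.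
Proof.
move=> e_gt0 le_rLoc inv le_er.
have singleton := singleton_vanishing e_gt0.
have le_k := dim_le_vanishing_card S.
have le_t : (t <= r)%N.
  apply: t_min.
  have : (#|S| + \dim (vanishing S) - \dim C).+1
           <= n.+2 - (\dim C + mindist C) by lia.
  by move=> le_J; have := leq_mul le_J (leqnn r); rewrite mulSn; lia.
have sum_ge : (r * #|~: S| <= \sum_(m in ~: S) Loc C m)%N.
  by apply: card_mul_le_sum => m; rewrite inE; apply: le_rLoc.
rewrite cardsCs setCK card_ord in sum_ge.
have J_gt0 : (0 < shortJ S)%N by rewrite /shortJ; lia.
apply: leq_trans (terminal_step_ineq le_t le_er (dim_vanishing_le_compl S) J_gt0) _.
by rewrite leq_add2r.
Qed.

Lemma sum_Loc_greedy S : (0 < \dim (vanishing S))%N ->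
  (forall m, m \notin S -> \dim C - \dim (vanishing S)
     <= (#|S| + \dim (vanishing S) - \dim C) * Loc C m)%N ->
  (t * (n - #|S|) + t * \dim (vanishing S)
     <= \sum_(m in ~: S) Loc C m + t * t * shortJ S)%N.
Proof.
have [c] := ubnP (n - #|S|); elim: c S => // c IH S lt_c e_gt0 inv.
have [l0 l0S] := vanishing_compl_neq0 e_gt0.
case: (@arg_minnP _ l0 (fun m => m \notin S) (Loc C) l0S) => l lS min_l.
have le_e_compl := dim_vanishing_le_compl S.
case: (leqP (\dim (vanishing S)) (Loc C l)) => [le_eL | lt_Le].
  exact: sum_Loc_terminal e_gt0 min_l (inv l lS) le_eL.
have [I repI card_I] : exists2 I, repair_set C l I & #|I| = Loc C l.
  by apply: Loc_repair; lia.
have lI : l \notin I by case/andP: repI.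
have le_e_e' := dim_vanishing_repair S repI.
set S' := l |: (S :|: I) in le_e_e' *.
have sSS' : S \subset S' := subset_trans (subsetUl S I) (subsetUr _ _).
have card_S' : #|S'| = (#|S| + #|I :\: S|).+1.
  rewrite cardsU1 inE negb_or lS lI cardsU cardsD.
  by have := subset_leq_card (subsetIl I S); rewrite setIC; lia.
have le_ID : (#|I :\: S| <= #|I|)%N by rewrite subset_leq_card ?subsetDl.
have e'_gt0 : (0 < \dim (vanishing S'))%N by lia.
have le_r'r : (\dim (vanishing S) - \dim (vanishing S') <= Loc C l)%N by lia.
have lt_r'D : (\dim (vanishing S) - \dim (vanishing S') < #|S'| - #|S|)%N by lia.
apply: (sum_Loc_extend sSS' e'_gt0 min_l le_r'r lt_r'D).
apply: IH e'_gt0 _; first by lia.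
move=> m mS'; have mS : m \notin S by apply: contra mS' => /(subsetP sSS').
apply: greedy_invariant_step (inv m mS) (min_l m mS) _ _; lia.
Qed.

End Greedy.
End Shortening.

Local Open Scope ring_scope.

Theorem theorem1 (F : finFieldType) (n : nat) (C : {vspace 'rV[F]_n}) :
  (1 <= \dim C)%N -> (2 <= mindist C)%N ->
  let k := \dim C in
  let d := mindist C in
  let J := (n.+2 - (k + d))%N in
  (ceildiv k J)%:R * (1 - ((J * ceildiv k J - k)%N)%:R / n%:R) <= avg_locality C.
Proof.
move=> k_gt0 _; cbv zeta.
set k : nat := \dim C; set d := mindist C; set J := (n.+2 - (k + d))%N.
set t := ceildiv k J.
have dimC_gt0 : (0 < \dim (vanishing C set0))%N by rewrite vanishing0.
have := singleton_vanishing dimC_gt0; rewrite vanishing0 cards0 add0n -/k -/d => le_kd.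
have := dim_vanishing_le_compl C set0; rewrite vanishing0 cards0 subn0 -/k => le_kn.
have J_gt0 : (0 < J)%N by rewrite /J; lia.
have t_gt0 : (0 < t)%N by rewrite ltnNge leq_ceildiv // muln0 -ltnNge.
have le_k_Jt : (k <= J * t)%N by rewrite -leq_ceildiv.
have lt_Jpredt_k : (J * t.-1 < k)%N by rewrite ltnNge -leq_ceildiv // -ltnNge ltn_predL.
have t_min r : (k <= J * r)%N -> (t <= r)%N by rewrite leq_ceildiv.
have := sum_Loc_greedy t_min dimC_gt0.
rewrite /shortJ vanishing0 cards0 !add0n subn0 subnn setC0 -/k -/d -/J.
move=> /(_ (fun _ _ => leq0n _)).
rewrite (eq_bigl (fun=> true)) => [greedy | i]; last by rewrite inE.
have key : (t * (n - (J * t - k)) <= \sum_i Loc C i)%N.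
  have := leq_mul (leqnn t) le_k_Jt; move: greedy.
  rewrite mulnBr mulnBr (mulnCA t J t) (mulnC J); move: (\sum_i _) => s; lia.
have le_Jt_n : (J * t - k <= n)%N.
  by move: lt_Jpredt_k; rewrite -(prednK t_gt0) mulnS /J; lia.
have n_neq0 : n%:R != 0 :> rat by rewrite pnatr_eq0 -lt0n; lia.
have -> : t%:R * (1 - (J * t - k)%:R / n%:R) = (t * (n - (J * t - k)))%:R / n%:R :> rat.
  by rewrite natrM (natrB _ le_Jt_n); field.
by rewrite /avg_locality ler_pM2r ?invr_gt0 ?ltr0n ?ler_nat //; lia.
Qed.
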